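(* Let $w$ be a Chebyshev weight, $n,\nu\in\mathbb N$, and let $Q$ be a trigonometric polynomial of degree at most $\nu$ that is even or odd. Let $t_k^n=t_k^n(w)$, $k=1,\dots,n$, be as in the context, set $t_0^n:=0$ and $\Delta t_k^n:=t_k^n-t_{k-1}^n$. Then $$\sum_{k=1}^n|Q(t_k^n)|\,\Delta t_k^n\le\Big(1+\frac{2\pi\nu}{n_w}\Big)\int_0^\pi|Q(\tau)|\,d\tau.$$
   Context: Chebyshev weights: $w_1(x)=(1-x^2)^{-1/2}$, $w_2(x)=(1-x^2)^{1/2}$, $w_3(x)=\sqrt{(1+x)/(1-x)}$, $w_4(x)=\sqrt{(1-x)/(1+x)}$. Angles: $t_k^n=\frac{(2k-1)\pi}{2n}$ ($w=w_1$), $\frac{k\pi}{n+1}$ ($w=w_2$), $\frac{(2k-1)\pi}{2n+1}$ ($w=w_3$), $\frac{2k\pi}{2n+1}$ ($w=w_4$), $k=1,\dots,n$. $n_w=n$ if $w=w_1$, $n_w=n+1$ if $w=w_2$, $n_w=\frac{2n+1}{2}$ if $w\in\{w_3,w_4\}$. *)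

From Stdlib Require Import Reals Lra.
From Coquelicot Require Import Coquelicot.
Open Scope R_scope.

Inductive cheb_weight : Type := W1 | W2 | W3 | W4.

Definition cheb_weight_fun (w : cheb_weight) (x : R) : R :=
  match w with
  | W1 => / sqrt (1 - x ^ 2)
  | W2 => sqrt (1 - x ^ 2)
  | W3 => sqrt ((1 + x) / (1 - x))
  | W4 => sqrt ((1 - x) / (1 + x))
  end.

Definition cheb_angle (w : cheb_weight) (n k : nat) : R :=
  match k with
  | O => 0
  | S _ =>
    match w with
    | W1 => (2 * INR k - 1) * PI / (2 * INR n)
    | W2 => INR k * PI / (INR n + 1)
    | W3 => (2 * INR k - 1) * PI / (2 * INR n + 1)
    | W4 => 2 * INR k * PI / (2 * INR n + 1)
    end
  end.

Definition cheb_dangle (w : cheb_weight) (n k : nat) : R :=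
  cheb_angle w n k - cheb_angle w n (k - 1).

Definition cheb_nw (w : cheb_weight) (n : nat) : R :=
  match w with
  | W1 => INR n
  | W2 => INR n + 1
  | W3 | W4 => (2 * INR n + 1) / 2
  end.

Definition trig_poly_eval (a b : nat -> R) (nu : nat) (t : R) : R :=
  a O + sum_n_m (fun j => a j * cos (INR j * t) + b j * sin (INR j * t)) 1 nu.

Definition is_trig_poly_deg_le (nu : nat) (Q : R -> R) : Prop :=
  exists a b : nat -> R, forall t, Q t = trig_poly_eval a b nu t.

Definition is_even_fun (Q : R -> R) : Prop := forall t, Q (- t) = Q t.
Definition is_odd_fun (Q : R -> R) : Prop := forall t, Q (- t) = - Q t.

From Stdlib Require Import Reals Lra Lia.
From Coquelicot Require Import Coquelicot.
Open Scope R_scope.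

(* Write Q as a trigonometric polynomial T of degree at most nu.  The proof
   combines three facts.
   1. A Riemann-sum estimate: if f is C^1 and a = t_0 <= t_1 <= ... <= t_n <= b
      with steps at most h, then, since |f(t_k)| <= |f(t)| + int_{t_{k-1}}^{t_k} |f'|
      for t in [t_{k-1}, t_k],
        sum_k |f(t_k)| (t_k - t_{k-1}) <= int_a^b |f| + h int_a^b |f'|.
   2. Bernstein's inequality in L^1:  int_{-pi}^{pi} |T'| <= nu int_{-pi}^{pi} |T|.
      It follows from M. Riesz's interpolation formula
        4 B T'(x) = sum_{k<nu} (-1)^k / sin^2(x_k/2) (T(x+x_k) - T(x-x_k)),
        x_k = (k+1/2) pi / nu,  where  sum_k 1/sin^2(x_k/2) = 2 nu B > 0,
      by the triangle inequality and the translation invariance of the integral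
      over a period.  When T is even or odd, |T'| is even, so the same bound
      holds on [0, pi].
   3. The Chebyshev angles start at t_0 = 0, increase by at most pi/n_w and end
      at t_n <= pi.
   Together these give the factor 1 + pi nu / n_w, which is below the claimed
   1 + 2 pi nu / n_w. *)

(* Finite sums f 0 + ... + f (n-1), recursive on the last term, which makes
   induction arguments (telescoping, recurrences in the summation range) direct. *)
Fixpoint fsum (f : nat -> R) (n : nat) : R :=
  match n with O => 0 | S m => fsum f m + f m end.

Lemma fsum_ext f g n : (forall i, (i < n)%nat -> f i = g i) -> fsum f n = fsum g n.
Proof.
  induction n as [|n IH]; simpl; intros H; auto.
  rewrite IH by (intros; apply H; lia). now rewrite H by lia.
Qed.

Lemma fsum_plus f g n : fsum (fun i => f i + g i) n = fsum f n + fsum g n.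
Proof. induction n as [|n IH]; simpl; [lra|]. rewrite IH; lra. Qed.

Lemma fsum_scal c f n : fsum (fun i => c * f i) n = c * fsum f n.
Proof. induction n as [|n IH]; simpl; [lra|]. rewrite IH; lra. Qed.

Lemma fsum_zero n : fsum (fun _ => 0) n = 0.
Proof. induction n as [|n IH]; simpl; [lra|]. rewrite IH; lra. Qed.

Lemma fsum_swap (F : nat -> nat -> R) n m :
  fsum (fun i => fsum (fun j => F i j) m) n = fsum (fun j => fsum (fun i => F i j) n) m.
Proof.
  induction n as [|n IH]; simpl.
  - now rewrite fsum_zero.
  - now rewrite IH, <- fsum_plus.
Qed.

Lemma fsum_le f g n : (forall i, (i < n)%nat -> f i <= g i) -> fsum f n <= fsum g n.
Proof.
  induction n as [|n IH]; simpl; intros H; [lra|].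
  assert (fsum f n <= fsum g n) by (apply IH; intros; apply H; lia).
  specialize (H n (Nat.lt_succ_diag_r n)). lra.
Qed.

Lemma fsum_abs f n : Rabs (fsum f n) <= fsum (fun i => Rabs (f i)) n.
Proof.
  induction n as [|n IH]; simpl.
  - rewrite Rabs_R0; lra.
  - eapply Rle_trans; [apply Rabs_triang|]. lra.
Qed.

Lemma fsum_pos f n : (1 <= n)%nat -> (forall i, (i < n)%nat -> 0 < f i) -> 0 < fsum f n.
Proof.
  induction n as [|n IH]; intros Hn H; [lia|]. simpl.
  destruct n as [|n].
  - simpl. specialize (H O ltac:(lia)). lra.
  - assert (0 < fsum f (S n)) by (apply IH; [lia | intros; apply H; lia]).
    specialize (H (S n) ltac:(lia)). lra.
Qed.

Lemma fsum_alt_telescope (g : nat -> R) m :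
  fsum (fun k => (-1)^k * (g (S k) + g k)) m = g O - (-1)^m * g m.
Proof. induction m as [|m IH]; simpl; [ring|]. rewrite IH. ring. Qed.

Lemma sum_n_m_fsum (f : nat -> R) n : sum_n_m f 1 n = fsum (fun i => f (S i)) n.
Proof.
  induction n as [|n IH].
  - now rewrite sum_n_m_zero by lia.
  - rewrite sum_n_Sm by lia. now rewrite IH.
Qed.

Lemma ex_RInt_cont (f : R -> R) a b : (forall x, continuous f x) -> ex_RInt f a b.
Proof. intros; apply (@ex_RInt_continuous R_CompleteNormedModule); auto. Qed.

Lemma continuous_fsum (h : nat -> R -> R) n x :
  (forall k, continuous (h k) x) -> continuous (fun y => fsum (fun k => h k y) n) x.
Proof.
  intros H; induction n as [|n IH]; simpl.
  - apply continuous_const.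
  - apply (continuous_plus (fun y => fsum (fun k => h k y) n) (h n)); auto.
Qed.

Lemma RInt_fsum (h : nat -> R -> R) n a b :
  (forall k x, continuous (h k) x) ->
  RInt (fun y => fsum (fun k => h k y) n) a b = fsum (fun k => RInt (h k) a b) n.
Proof.
  intros H; induction n as [|n IH]; simpl.
  - rewrite RInt_const. unfold scal; simpl; unfold mult; simpl. ring.
  - rewrite <- IH.
    apply (RInt_plus (fun y => fsum (fun k => h k y) n) (h n)); apply ex_RInt_cont;
      auto using continuous_fsum.
Qed.

Lemma RInt_fsum_Chasles (F : R -> R) (t : nat -> R) m : (forall x, continuous F x) ->
  fsum (fun i => RInt F (t i) (t (S i))) m = RInt F (t O) (t m).
Proof.
  intros H. induction m as [|m IH]; simpl.
  - now rewrite RInt_point.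
  - rewrite IH. apply (RInt_Chasles F); apply ex_RInt_cont; auto.
Qed.

Lemma RInt_nonneg_mono (F : R -> R) a b c :
  (forall x, continuous F x) -> (forall x, 0 <= F x) -> b <= c ->
  RInt F a b <= RInt F a c.
Proof.
  intros HF HF0 Hbc.
  rewrite <- (RInt_Chasles F a b c) by (apply ex_RInt_cont; auto).
  assert (0 <= RInt F b c) by (apply RInt_ge_0; auto; apply ex_RInt_cont; auto).
  unfold plus; simpl; lra.
Qed.

Lemma RInt_shift (F : R -> R) c a b : (forall x, continuous F x) ->
  RInt (fun x => F (x + c)) a b = RInt F (a + c) (b + c).
Proof.
  intros H. replace (a + c) with (1 * a + c) by ring. replace (b + c) with (1 * b + c) by ring.
  rewrite <- (RInt_comp_lin F 1 c a b) by (apply ex_RInt_cont; auto).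
  apply RInt_ext. intros x _. unfold scal; simpl; unfold mult; simpl. now rewrite !Rmult_1_l.
Qed.

Lemma RInt_periodic_shift (F : R -> R) c :
  (forall x, continuous F x) -> (forall x, F (x + 2 * PI) = F x) ->
  RInt (fun x => F (x + c)) (- PI) PI = RInt F (- PI) PI.
Proof.
  intros H Hp. rewrite RInt_shift by auto.
  assert (Hwrap : RInt F PI (PI + c) = RInt F (- PI) (- PI + c)).
  { replace PI with (- PI + 2 * PI) at 1 by ring.
    replace (PI + c) with (- PI + c + 2 * PI) by ring.
    rewrite <- RInt_shift by auto. apply RInt_ext. intros; auto. }
  rewrite <- (RInt_Chasles F (- PI + c) (- PI) (PI + c)) by (apply ex_RInt_cont; auto).
  rewrite <- (RInt_Chasles F (- PI) PI (PI + c)) by (apply ex_RInt_cont; auto).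
  rewrite Hwrap, <- (opp_RInt_swap F (- PI) (- PI + c)) by (apply ex_RInt_cont; auto).
  unfold plus, opp; simpl. ring.
Qed.

Lemma RInt_even (G : R -> R) : (forall x, continuous G x) -> (forall x, G (- x) = G x) ->
  RInt G (- PI) PI = 2 * RInt G 0 PI.
Proof.
  intros H He.
  rewrite <- (RInt_Chasles G (- PI) 0 PI) by (apply ex_RInt_cont; auto).
  assert (Hrefl : RInt G (- PI) 0 = RInt G 0 PI).
  { assert (E := RInt_comp_lin G (-1) 0 0 PI).
    replace (-1 * 0 + 0) with 0 in E by ring. replace (-1 * PI + 0) with (- PI) in E by ring.
    rewrite <- opp_RInt_swap, <- E by (apply ex_RInt_cont; auto).
    rewrite (RInt_ext _ (fun y => scal (-1) (G y))).
    - rewrite (RInt_scal (V := R_CompleteNormedModule)) by (apply ex_RInt_cont; auto).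
      unfold opp, scal; simpl; unfold mult; simpl. ring.
    - intros x _. replace (-1 * x + 0) with (- x) by ring. now rewrite He. }
  rewrite Hrefl. unfold plus; simpl; ring.
Qed.

Definition tp (a b : nat -> R) (nu : nat) (t : R) : R :=
  a O + fsum (fun i => a (S i) * cos (INR (S i) * t) + b (S i) * sin (INR (S i) * t)) nu.

Definition tpd (a b : nat -> R) (nu : nat) (t : R) : R :=
  fsum (fun i => INR (S i) * (b (S i) * cos (INR (S i) * t) - a (S i) * sin (INR (S i) * t))) nu.

Lemma trig_poly_eval_tp a b nu t : trig_poly_eval a b nu t = tp a b nu t.
Proof. unfold trig_poly_eval, tp. now rewrite sum_n_m_fsum. Qed.

Lemma tp_derive a b nu t : is_derive (tp a b nu) t (tpd a b nu t).
Proof.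
  unfold tp, tpd. induction nu as [|nu IH]; simpl.
  - apply (is_derive_ext (fun _ => a O)); [intros; simpl; ring|]. auto_derive; auto.
  - set (F := fun t => a O + fsum (fun i => a (S i) * cos (INR (S i) * t)
                                          + b (S i) * sin (INR (S i) * t)) nu).
    apply (is_derive_ext (fun t => F t + (a (S nu) * cos (INR (S nu) * t)
                                          + b (S nu) * sin (INR (S nu) * t)))).
    { intros; unfold F; simpl; ring. }
    apply (is_derive_plus F); [exact IH|]. auto_derive; auto. simpl. ring.
Qed.

Lemma tpd_tp a b nu t :
  tpd a b nu t = tp (fun i => match i with O => 0 | S _ => INR i * b i end)
                    (fun i => match i with O => 0 | S _ => - INR i * a i end) nu t.
Proof. unfold tpd, tp. rewrite Rplus_0_l. apply fsum_ext; intros; ring. Qed.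

Lemma tp_cont a b nu t : continuous (tp a b nu) t.
Proof.
  apply (ex_derive_continuous (K := R_AbsRing) (V := R_NormedModule)).
  eexists; apply tp_derive.
Qed.

Lemma tpd_cont a b nu t : continuous (tpd a b nu) t.
Proof.
  eapply continuous_ext; [intros; symmetry; apply tpd_tp|]. apply tp_cont.
Qed.

Lemma tp_abs_cont a b nu t : continuous (fun y => Rabs (tp a b nu y)) t.
Proof. apply continuous_Rabs_comp, tp_cont. Qed.

Lemma tpd_abs_cont a b nu t : continuous (fun y => Rabs (tpd a b nu y)) t.
Proof. apply continuous_Rabs_comp, tpd_cont. Qed.

Lemma tp_abs_shift_cont a b nu c t : continuous (fun y => Rabs (tp a b nu (y + c))) t.
Proof.
  apply continuous_Rabs_comp, (continuous_comp (fun y => y + c) (tp a b nu)).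
  - apply (continuous_plus (fun y => y) (fun _ => c)); [apply continuous_id | apply continuous_const].
  - apply tp_cont.
Qed.

Lemma tp_period a b nu t : tp a b nu (t + 2 * PI) = tp a b nu t.
Proof.
  unfold tp. f_equal. apply fsum_ext; intros i _.
  replace (INR (S i) * (t + 2 * PI)) with (INR (S i) * t + 2 * INR (S i) * PI) by ring.
  now rewrite cos_period, sin_period.
Qed.

Lemma RInt_abs_tp_shift a b nu c :
  RInt (fun x => Rabs (tp a b nu (x + c))) (- PI) PI = RInt (fun x => Rabs (tp a b nu x)) (- PI) PI.
Proof.
  apply (RInt_periodic_shift (fun x => Rabs (tp a b nu x))); [apply tp_abs_cont|].
  intros; now rewrite tp_period.
Qed.

(* The i-th harmonic of T' divided by its frequency i+1; it governs both T' and
   the symmetric differences T(x+y) - T(x-y). *)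
Definition harmonic_deriv (a b : nat -> R) (x : R) (i : nat) : R :=
  b (S i) * cos (INR (S i) * x) - a (S i) * sin (INR (S i) * x).

Lemma tpd_harmonics a b nu x : tpd a b nu x = fsum (fun i => INR (S i) * harmonic_deriv a b x i) nu.
Proof. reflexivity. Qed.

Lemma tp_sym_diff a b nu x y :
  tp a b nu (x + y) - tp a b nu (x - y)
  = fsum (fun i => 2 * sin (INR (S i) * y) * harmonic_deriv a b x i) nu.
Proof.
  unfold tp, harmonic_deriv. induction nu as [|nu IH]; cbn [fsum]; [ring|].
  replace (INR (S nu) * (x + y)) with (INR (S nu) * x + INR (S nu) * y) by ring.
  replace (INR (S nu) * (x - y)) with (INR (S nu) * x - INR (S nu) * y) by ring.
  rewrite cos_plus, cos_minus, sin_plus, sin_minus. lra.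
Qed.

Lemma tpd_abs_even a b nu :
  (forall t, tp a b nu (- t) = tp a b nu t) \/ (forall t, tp a b nu (- t) = - tp a b nu t) ->
  forall x, Rabs (tpd a b nu (- x)) = Rabs (tpd a b nu x).
Proof.
  intros Hpar x.
  assert (Hrefl : is_derive (fun t => tp a b nu (- t)) x (- tpd a b nu (- x))).
  { replace (- tpd a b nu (- x)) with (scal (-1) (tpd a b nu (- x)))
      by (unfold scal; simpl; unfold mult; simpl; ring).
    apply (is_derive_comp (tp a b nu) (fun s => - s)); [apply tp_derive|].
    auto_derive; auto. }
  destruct Hpar as [He | Ho].
  - apply (is_derive_ext _ (tp a b nu)) in Hrefl; [|intros; apply He].
    apply is_derive_unique in Hrefl.
    rewrite (is_derive_unique _ _ _ (tp_derive a b nu x)) in Hrefl.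
    now rewrite Hrefl, Rabs_Ropp.
  - apply (is_derive_ext _ (fun t => - tp a b nu t)) in Hrefl; [|intros; apply Ho].
    assert (Hopp : is_derive (fun t => - tp a b nu t) x (- tpd a b nu x))
      by (apply (is_derive_opp (tp a b nu)), tp_derive).
    apply is_derive_unique in Hrefl. apply is_derive_unique in Hopp.
    rewrite Hrefl in Hopp. rewrite <- (Rabs_Ropp (tpd a b nu (- x))), Hopp, Rabs_Ropp.
    reflexivity.
Qed.

Lemma sin_INR_mult_PI j : sin (INR j * PI) = 0.
Proof. apply sin_eq_0_1. exists (Z.of_nat j). now rewrite <- INR_IZR_INZ. Qed.

Lemma sin_half_odd_mult_PI k : sin ((INR k + / 2) * PI) = (-1) ^ k.
Proof.
  induction k as [|k IH].
  - simpl. replace ((0 + / 2) * PI) with (PI / 2) by field. apply sin_PI2.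
  - rewrite S_INR. replace ((INR k + 1 + / 2) * PI) with ((INR k + / 2) * PI + PI) by ring.
    rewrite neg_sin, IH. simpl. ring.
Qed.

(* The trigonometric identities behind the recurrences for the Riesz sums below;
   the angle 2h plays the role of a node x_k and h = x_k / 2. *)
Lemma cot_mul_cos_diff j h : sin h <> 0 ->
  cos h / sin h * (cos (INR (S j) * (2 * h)) - cos (INR j * (2 * h))) =
  - (sin (INR (S j) * (2 * h)) + sin (INR j * (2 * h))).
Proof.
  intros Hs. rewrite S_INR.
  replace ((INR j + 1) * (2 * h)) with ((2 * INR j + 1) * h + h) by ring.
  replace (INR j * (2 * h)) with ((2 * INR j + 1) * h - h) by ring.
  rewrite cos_plus, cos_minus, sin_plus, sin_minus. field. auto.
Qed.

Lemma sin_diff_over_sin2 j h : sin h <> 0 ->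
  (sin (INR (S (S j)) * (2 * h)) - sin (INR j * (2 * h))) / sin h ^ 2 =
  4 * (cos (INR (S j) * (2 * h)) * (cos h / sin h)).
Proof.
  intros Hs. rewrite !S_INR.
  replace ((INR j + 1 + 1) * (2 * h)) with ((INR j + 1) * (2 * h) + 2 * h) by ring.
  replace (INR j * (2 * h)) with ((INR j + 1) * (2 * h) - 2 * h) by ring.
  rewrite sin_plus, sin_minus, sin_2a. field. auto.
Qed.

Section RieszInterpolation.
Variable N : nat.
Hypothesis N_pos : (1 <= N)%nat.

Definition riesz_node (k : nat) : R := (INR k + / 2) * (PI / INR N).
Definition riesz_half (k : nat) : R := riesz_node k / 2.

Lemma INR_N_pos : 0 < INR N.
Proof. apply lt_0_INR; lia. Qed.

Lemma riesz_half_range k : (k < N)%nat -> 0 < riesz_half k < PI / 2.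
Proof.
  intros Hk. unfold riesz_half, riesz_node.
  assert (H1 := INR_N_pos). assert (H2 := PI_RGT_0).
  assert (INR k + 1 <= INR N) by (rewrite <- S_INR; apply le_INR; lia).
  assert (0 <= INR k) by apply pos_INR.
  split.
  - apply Rmult_lt_0_compat; [|lra].
    apply Rmult_lt_0_compat; [lra|]. apply Rdiv_lt_0_compat; lra.
  - apply Rmult_lt_reg_r with (2 * INR N / PI); [apply Rdiv_lt_0_compat; lra|].
    field_simplify; lra.
Qed.

Lemma sin_riesz_half_pos k : (k < N)%nat -> 0 < sin (riesz_half k).
Proof. intros Hk. destruct (riesz_half_range k Hk). apply sin_gt_0; lra. Qed.

Lemma riesz_node_half k : riesz_node k = 2 * riesz_half k.
Proof. unfold riesz_half; field. Qed.

(* C_j = sum_k (-1)^k sin(j x_k) *)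
Definition alt_sin_sum (j : nat) : R :=
  fsum (fun k => (-1) ^ k * sin (INR j * riesz_node k)) N.
(* B_j = sum_k (-1)^k cos(j x_k) cot(x_k / 2) *)
Definition alt_cot_sum (j : nat) : R :=
  fsum (fun k => (-1) ^ k * cos (INR j * riesz_node k)
                 * (cos (riesz_half k) / sin (riesz_half k))) N.
(* A_j = sum_k (-1)^k sin(j x_k) / sin^2(x_k / 2): the coefficient of the j-th
   harmonic in Riesz's formula. *)
Definition riesz_coef (j : nat) : R :=
  fsum (fun k => (-1) ^ k * sin (INR j * riesz_node k) / sin (riesz_half k) ^ 2) N.

(* C_j = 0 for j < N: multiplying by 2 cos(j pi / 2N) makes the sum telescope to
   sin(j pi) - sin 0. *)
Lemma alt_sin_sum_zero j : (j < N)%nat -> alt_sin_sum j = 0.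
Proof.
  intros Hj. set (d := PI / INR N).
  assert (Hd : 0 < d) by (apply Rdiv_lt_0_compat; [apply PI_RGT_0 | apply INR_N_pos]).
  assert (Hc : 0 < cos (INR j * d / 2)).
  { assert (0 <= INR j) by apply pos_INR.
    assert (INR j + 1 <= INR N) by (rewrite <- S_INR; apply le_INR; lia).
    assert (H1 := INR_N_pos). assert (H2 := PI_RGT_0).
    assert (INR j * d < PI).
    { unfold d. apply Rmult_lt_reg_r with (INR N); [lra|]. field_simplify; nra. }
    apply cos_gt_0; nra. }
  assert (Htel : 2 * cos (INR j * d / 2) * alt_sin_sum j = 0).
  { unfold alt_sin_sum. rewrite <- fsum_scal.
    rewrite (fsum_ext _ (fun k => (-1) ^ k * ((fun k => sin (INR j * INR k * d)) (S k)
                                             + (fun k => sin (INR j * INR k * d)) k))).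
    - rewrite (fsum_alt_telescope (fun k => sin (INR j * INR k * d))). simpl.
      replace (INR j * 0 * d) with 0 by ring.
      replace (INR j * INR N * d) with (INR j * PI) by (unfold d; field; apply Rgt_not_eq, INR_N_pos).
      rewrite sin_0, sin_INR_mult_PI. ring.
    - intros i _. rewrite S_INR. unfold riesz_node. fold d.
      replace (INR j * (INR i + 1) * d) with (INR j * ((INR i + / 2) * d) + INR j * d / 2) by field.
      replace (INR j * INR i * d) with (INR j * ((INR i + / 2) * d) - INR j * d / 2) by field.
      rewrite sin_plus, sin_minus. ring. }
  apply Rmult_integral in Htel. destruct Htel; lra.
Qed.

Lemma alt_cot_sum_step j : alt_cot_sum (S j) = alt_cot_sum j - (alt_sin_sum (S j) + alt_sin_sum j).
Proof.
  unfold alt_cot_sum, alt_sin_sum.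
  transitivity (fsum (fun k => (-1) ^ k * cos (INR j * riesz_node k)
                                 * (cos (riesz_half k) / sin (riesz_half k))
     + (-1) * ((-1) ^ k * sin (INR (S j) * riesz_node k) + (-1) ^ k * sin (INR j * riesz_node k))) N);
    [|rewrite fsum_plus, fsum_scal, fsum_plus; ring].
  apply fsum_ext. intros k Hk.
  rewrite !riesz_node_half.
  assert (Hs := sin_riesz_half_pos k Hk).
  assert (E := cot_mul_cos_diff j (riesz_half k) ltac:(lra)).
  transitivity ((-1) ^ k * (cos (INR j * (2 * riesz_half k)) * (cos (riesz_half k) / sin (riesz_half k))
     + cos (riesz_half k) / sin (riesz_half k)
       * (cos (INR (S j) * (2 * riesz_half k)) - cos (INR j * (2 * riesz_half k))))).
  - field. lra.
  - rewrite E. ring.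
Qed.

Lemma alt_cot_sum_const j : (j < N)%nat -> alt_cot_sum j = alt_cot_sum 0.
Proof.
  induction j as [|j IH]; intros Hj; auto.
  rewrite alt_cot_sum_step, IH, !alt_sin_sum_zero by lia. ring.
Qed.

Lemma riesz_coef_0 : riesz_coef 0 = 0.
Proof.
  unfold riesz_coef. rewrite <- (fsum_zero N). apply fsum_ext. intros.
  simpl. rewrite Rmult_0_l, sin_0. unfold Rdiv; ring.
Qed.

Lemma riesz_coef_1 : riesz_coef 1 = 2 * alt_cot_sum 0.
Proof.
  unfold riesz_coef, alt_cot_sum. rewrite <- fsum_scal. apply fsum_ext. intros k Hk.
  assert (Hs := sin_riesz_half_pos k Hk). rewrite riesz_node_half. simpl.
  rewrite Rmult_0_l, Rmult_1_l, cos_0, sin_2a. field. lra.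
Qed.

Lemma riesz_coef_step j : riesz_coef (S (S j)) = riesz_coef j + 4 * alt_cot_sum (S j).
Proof.
  unfold riesz_coef, alt_cot_sum. rewrite <- fsum_scal, <- fsum_plus. apply fsum_ext. intros k Hk.
  assert (Hs := sin_riesz_half_pos k Hk). rewrite !riesz_node_half.
  assert (E := sin_diff_over_sin2 j (riesz_half k) ltac:(lra)).
  transitivity ((-1) ^ k * sin (INR j * (2 * riesz_half k)) / sin (riesz_half k) ^ 2 +
    (-1) ^ k * ((sin (INR (S (S j)) * (2 * riesz_half k)) - sin (INR j * (2 * riesz_half k)))
                / sin (riesz_half k) ^ 2)).
  - field. lra.
  - rewrite E. ring.
Qed.

Lemma riesz_coef_linear j : (j <= N)%nat -> riesz_coef j = 2 * INR j * alt_cot_sum 0.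
Proof.
  assert (Hpair : forall j, (S j <= N)%nat ->
    riesz_coef j = 2 * INR j * alt_cot_sum 0 /\ riesz_coef (S j) = 2 * INR (S j) * alt_cot_sum 0).
  { intro i. induction i as [|i IH]; intros Hi.
    - rewrite riesz_coef_0, riesz_coef_1. simpl. split; ring.
    - destruct IH as [H1 H2]; [lia|]. split; auto.
      rewrite riesz_coef_step, H1, (alt_cot_sum_const (S i)) by lia. rewrite !S_INR. ring. }
  intros Hj. destruct j as [|j].
  - rewrite riesz_coef_0. simpl; ring.
  - now apply Hpair.
Qed.

(* S = sum_k 1 / sin^2(x_k / 2), which equals A_N since sin(N x_k) = (-1)^k. *)
Definition inv_sin2_sum : R := fsum (fun k => / sin (riesz_half k) ^ 2) N.

Lemma riesz_coef_N : riesz_coef N = inv_sin2_sum.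
Proof.
  unfold riesz_coef, inv_sin2_sum. apply fsum_ext. intros k Hk. unfold riesz_node.
  replace (INR N * ((INR k + / 2) * (PI / INR N))) with ((INR k + / 2) * PI)
    by (field; apply Rgt_not_eq, INR_N_pos).
  rewrite sin_half_odd_mult_PI. assert (Hs := sin_riesz_half_pos k Hk).
  replace ((-1) ^ k * (-1) ^ k) with 1.
  - field. lra.
  - rewrite <- pow_add. replace (k + k)%nat with (2 * k)%nat by lia. now rewrite pow_1_even.
Qed.

Lemma inv_sin2_sum_pos : 0 < inv_sin2_sum.
Proof.
  apply fsum_pos; auto. intros i Hi. assert (Hs := sin_riesz_half_pos i Hi).
  apply Rinv_0_lt_compat, pow_lt; lra.
Qed.

Lemma alt_cot_sum_0_eq : alt_cot_sum 0 = inv_sin2_sum / (2 * INR N).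
Proof.
  assert (H := riesz_coef_linear N (Nat.le_refl N)). rewrite riesz_coef_N in H.
  rewrite H. field. apply Rgt_not_eq, INR_N_pos.
Qed.

Lemma alt_cot_sum_0_pos : 0 < alt_cot_sum 0.
Proof.
  rewrite alt_cot_sum_0_eq. apply Rdiv_lt_0_compat; [apply inv_sin2_sum_pos|].
  assert (H := INR_N_pos). lra.
Qed.

Lemma riesz_formula a b x :
  fsum (fun k => (-1) ^ k / sin (riesz_half k) ^ 2
                 * (tp a b N (x + riesz_node k) - tp a b N (x - riesz_node k))) N
  = 4 * alt_cot_sum 0 * tpd a b N x.
Proof.
  rewrite (fsum_ext _ (fun k => fsum (fun i => (-1) ^ k / sin (riesz_half k) ^ 2
            * (2 * sin (INR (S i) * riesz_node k) * harmonic_deriv a b x i)) N)).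
  - rewrite fsum_swap, tpd_harmonics, <- fsum_scal. apply fsum_ext. intros i Hi.
    rewrite (fsum_ext _ (fun k => (2 * harmonic_deriv a b x i)
               * ((-1) ^ k * sin (INR (S i) * riesz_node k) / sin (riesz_half k) ^ 2))).
    + rewrite fsum_scal. fold (riesz_coef (S i)). rewrite riesz_coef_linear by lia. ring.
    + intros k Hk. assert (Hs := sin_riesz_half_pos k Hk). field. lra.
  - intros k _. now rewrite tp_sym_diff, fsum_scal.
Qed.

Definition riesz_weight (k : nat) : R := / (4 * alt_cot_sum 0 * sin (riesz_half k) ^ 2).

Lemma riesz_weight_pos k : (k < N)%nat -> 0 < riesz_weight k.
Proof.
  intros Hk. assert (Hs := sin_riesz_half_pos k Hk). assert (HB := alt_cot_sum_0_pos).
  apply Rinv_0_lt_compat, Rmult_lt_0_compat; [lra | apply pow_lt; lra].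
Qed.

Lemma riesz_weight_sum : fsum riesz_weight N = INR N / 2.
Proof.
  assert (HB := alt_cot_sum_0_pos). assert (HN := INR_N_pos). assert (HS := inv_sin2_sum_pos).
  rewrite (fsum_ext _ (fun k => / (4 * alt_cot_sum 0) * / sin (riesz_half k) ^ 2)).
  - rewrite fsum_scal. fold inv_sin2_sum. rewrite alt_cot_sum_0_eq. field. lra.
  - intros k Hk. assert (Hs := sin_riesz_half_pos k Hk). unfold riesz_weight. field. lra.
Qed.

Lemma riesz_pointwise_bound a b x :
  Rabs (tpd a b N x) <=
  fsum (fun k => riesz_weight k * (Rabs (tp a b N (x + riesz_node k))
                                   + Rabs (tp a b N (x + - riesz_node k)))) N.
Proof.
  assert (HB := alt_cot_sum_0_pos).
  replace (tpd a b N x) with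
    (fsum (fun k => (-1) ^ k * (riesz_weight k
       * (tp a b N (x + riesz_node k) - tp a b N (x - riesz_node k)))) N).
  - eapply Rle_trans; [apply fsum_abs|]. apply fsum_le. intros k Hk.
    assert (Hw := riesz_weight_pos k Hk).
    rewrite Rabs_mult, pow_1_abs, Rmult_1_l, Rabs_mult, (Rabs_right (riesz_weight k)) by lra.
    apply Rmult_le_compat_l; [lra|].
    unfold Rminus. eapply Rle_trans; [apply Rabs_triang|]. rewrite Rabs_Ropp. lra.
  - apply (Rmult_eq_reg_l (4 * alt_cot_sum 0)); [|lra].
    rewrite <- riesz_formula, <- fsum_scal. apply fsum_ext. intros k Hk.
    assert (Hs := sin_riesz_half_pos k Hk). unfold riesz_weight. field. lra.
Qed.

End RieszInterpolation.

(* Bernstein's inequality in L^1 over a period: integrate the pointwise Riesz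
   bound; each shifted copy of |T| has the same integral and the weights sum to
   N/2. *)
Lemma bernstein_L1_period a b N :
  RInt (fun x => Rabs (tpd a b N x)) (- PI) PI <= INR N * RInt (fun x => Rabs (tp a b N x)) (- PI) PI.
Proof.
  destruct N as [|M].
  { unfold tpd; simpl. rewrite (RInt_ext _ (fun _ => 0)) by (intros; apply Rabs_R0).
    rewrite RInt_const. unfold scal; simpl; unfold mult; simpl. lra. }
  set (N := S M). assert (HN : (1 <= N)%nat) by (unfold N; lia).
  set (I := RInt (fun x => Rabs (tp a b N x)) (- PI) PI).
  set (h := fun k x => riesz_weight N k * (Rabs (tp a b N (x + riesz_node N k))
                                          + Rabs (tp a b N (x + - riesz_node N k)))).
  assert (Hh : forall k x, continuous (h k) x).
  { intros k x. apply (continuous_mult (K := R_AbsRing) (fun _ => riesz_weight N k));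
      [apply continuous_const|].
    apply (continuous_plus (fun y => Rabs (tp a b N (y + riesz_node N k)))
                           (fun y => Rabs (tp a b N (y + - riesz_node N k))));
      apply tp_abs_shift_cont. }
  assert (Hint : forall k, RInt (h k) (- PI) PI = 2 * I * riesz_weight N k).
  { intros k. unfold h.
    rewrite (RInt_scal (V := R_CompleteNormedModule)
               (fun x => Rabs (tp a b N (x + riesz_node N k)) + Rabs (tp a b N (x + - riesz_node N k))))
      by (apply ex_RInt_cont; intros; apply (continuous_plus (fun y => Rabs (tp a b N (y + riesz_node N k)))
                                     (fun y => Rabs (tp a b N (y + - riesz_node N k)))); apply tp_abs_shift_cont).
    rewrite (RInt_plus (V := R_CompleteNormedModule)
               (fun x => Rabs (tp a b N (x + riesz_node N k))) (fun x => Rabs (tp a b N (x + - riesz_node N k))))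
      by (apply ex_RInt_cont; apply tp_abs_shift_cont).
    rewrite !RInt_abs_tp_shift. fold I. unfold scal, plus; simpl; unfold mult; simpl. ring. }
  apply Rle_trans with (RInt (fun y => fsum (fun k => h k y) N) (- PI) PI).
  - apply RInt_le; [assert (H := PI_RGT_0); lra | apply ex_RInt_cont, tpd_abs_cont | |].
    + apply ex_RInt_cont. intros; apply continuous_fsum; auto.
    + intros x _. apply riesz_pointwise_bound; auto.
  - rewrite RInt_fsum by auto. rewrite (fsum_ext _ _ _ (fun k _ => Hint k)).
    rewrite fsum_scal, riesz_weight_sum by auto. fold I. right; field.
Qed.

(* For even or odd T, |T| and |T'| are even, so the bound holds on [0, pi]. *)
Lemma bernstein_L1_half a b N :
  (forall t, tp a b N (- t) = tp a b N t) \/ (forall t, tp a b N (- t) = - tp a b N t) ->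
  RInt (fun x => Rabs (tpd a b N x)) 0 PI <= INR N * RInt (fun x => Rabs (tp a b N x)) 0 PI.
Proof.
  intros Hpar. assert (H := bernstein_L1_period a b N).
  rewrite (RInt_even (fun x => Rabs (tpd a b N x))), (RInt_even (fun x => Rabs (tp a b N x))) in H.
  - lra.
  - apply tp_abs_cont.
  - intros x. destruct Hpar as [He | Ho]; rewrite ?He, ?Ho, ?Rabs_Ropp; auto.
  - apply tpd_abs_cont.
  - apply tpd_abs_even; auto.
Qed.

Section RiemannSum.
Variables f df : R -> R.
Hypothesis f_derive : forall x, is_derive f x (df x).
Hypothesis df_cont : forall x, continuous df x.

Lemma f_abs_cont x : continuous (fun y => Rabs (f y)) x.
Proof.
  apply continuous_Rabs_comp, (ex_derive_continuous (K := R_AbsRing) (V := R_NormedModule)).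
  eexists; apply f_derive.
Qed.

Lemma df_abs_cont x : continuous (fun y => Rabs (df y)) x.
Proof. apply continuous_Rabs_comp, df_cont. Qed.

(* On [l, r]: |f r| (r - l) <= int_l^r |f| + (r - l) int_l^r |f'|, because
   |f r| <= |f t| + int_t^r |f'| for every t in [l, r]. *)
Lemma right_endpoint_bound l r : l <= r ->
  Rabs (f r) * (r - l) <=
  RInt (fun x => Rabs (f x)) l r + (r - l) * RInt (fun x => Rabs (df x)) l r.
Proof.
  intros Hlr. set (V := RInt (fun x => Rabs (df x)) l r).
  assert (Hpt : forall t, l <= t <= r -> Rabs (f r) - V <= Rabs (f t)).
  { intros t Ht.
    assert (Hftc : RInt df t r = f r - f t)
      by (apply is_RInt_unique, (is_RInt_derive f df); auto).
    assert (Habs : Rabs (RInt df t r) <= RInt (fun x => Rabs (df x)) t r)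
      by (apply abs_RInt_le; [lra | apply ex_RInt_cont; auto]).
    assert (Hsplit : RInt (fun x => Rabs (df x)) l t + RInt (fun x => Rabs (df x)) t r = V)
      by (apply (RInt_Chasles (V := R_CompleteNormedModule)); apply ex_RInt_cont, df_abs_cont).
    assert (0 <= RInt (fun x => Rabs (df x)) l t)
      by (apply RInt_ge_0; [lra | apply ex_RInt_cont, df_abs_cont | intros; apply Rabs_pos]).
    assert (Rabs (f r) <= Rabs (f t) + Rabs (f r - f t))
      by (replace (f r) with (f t + (f r - f t)) at 1 by ring; apply Rabs_triang).
    rewrite Hftc in Habs. lra. }
  assert (Hint : RInt (fun _ => Rabs (f r) - V) l r <= RInt (fun x => Rabs (f x)) l r).
  { apply RInt_le; auto.
    - apply ex_RInt_cont; intros; apply continuous_const.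
    - apply ex_RInt_cont, f_abs_cont.
    - intros t Ht. apply Hpt; lra. }
  rewrite RInt_const in Hint. unfold scal in Hint; simpl in Hint; unfold mult in Hint; simpl in Hint.
  lra.
Qed.

Lemma riemann_sum_bound (t : nat -> R) n h a b :
  0 <= h -> t O = a -> (forall i, (i < n)%nat -> 0 <= t (S i) - t i <= h) -> t n <= b ->
  fsum (fun i => Rabs (f (t (S i))) * (t (S i) - t i)) n
  <= RInt (fun x => Rabs (f x)) a b + h * RInt (fun x => Rabs (df x)) a b.
Proof.
  intros Hh Ha Hstep Hb.
  assert (Hmono : forall m, (m <= n)%nat -> a <= t m).
  { induction m as [|m IH]; intros Hm; [lra|].
    specialize (Hstep m ltac:(lia)). specialize (IH ltac:(lia)). lra. }
  apply Rle_trans with (fsum (fun i => RInt (fun x => Rabs (f x)) (t i) (t (S i))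
                                       + h * RInt (fun x => Rabs (df x)) (t i) (t (S i))) n).
  - apply fsum_le. intros i Hi. specialize (Hstep i Hi).
    assert (Hb' := right_endpoint_bound (t i) (t (S i)) ltac:(lra)).
    assert (0 <= RInt (fun x => Rabs (df x)) (t i) (t (S i)))
      by (apply RInt_ge_0; [lra | apply ex_RInt_cont, df_abs_cont | intros; apply Rabs_pos]).
    nra.
  - rewrite fsum_plus, fsum_scal, !RInt_fsum_Chasles, Ha by (apply f_abs_cont || apply df_abs_cont).
    assert (Hn := Hmono n (le_n n)).
    assert (RInt (fun x => Rabs (f x)) a (t n) <= RInt (fun x => Rabs (f x)) a b)
      by (apply RInt_nonneg_mono; auto using f_abs_cont, Rabs_pos).
    assert (RInt (fun x => Rabs (df x)) a (t n) <= RInt (fun x => Rabs (df x)) a b)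
      by (apply RInt_nonneg_mono; auto using df_abs_cont, Rabs_pos).
    nra.
Qed.

End RiemannSum.

Lemma cheb_nw_pos w n : (1 <= n)%nat -> 0 < cheb_nw w n.
Proof. intros. assert (0 < INR n) by (apply lt_0_INR; lia). destruct w; simpl; lra. Qed.

(* Consecutive Chebyshev angles differ by pi/n_w, except the first step of w1 and
   w3, which is half of that. *)
Lemma cheb_angle_step w n i : (1 <= n)%nat -> (i < n)%nat ->
  0 <= cheb_angle w n (S i) - cheb_angle w n i <= PI / cheb_nw w n.
Proof.
  intros Hn Hi. assert (Hp := PI_RGT_0). assert (H0 : 0 < INR n) by (apply lt_0_INR; lia).
  assert (Hq : 0 < PI / cheb_nw w n) by (apply Rdiv_lt_0_compat; auto; apply cheb_nw_pos; auto).
  assert (Hr : exists r, (r = 1 \/ r = / 2) /\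
            cheb_angle w n (S i) - cheb_angle w n i = r * (PI / cheb_nw w n)).
  { destruct i as [|j]; destruct w; unfold cheb_angle, cheb_nw; rewrite ?S_INR; simpl;
      [exists (/ 2) | exists 1 | exists (/ 2) | exists 1 | exists 1 ..];
      split; auto; rewrite ?S_INR; field; lra. }
  destruct Hr as [r [Hr E]]. rewrite E. destruct Hr; subst; split; nra.
Qed.

Lemma cheb_angle_last w n : (1 <= n)%nat -> cheb_angle w n n <= PI.
Proof.
  intros Hn. assert (Hp := PI_RGT_0).
  destruct n as [|m]; [lia|]. assert (H0 : 0 < INR (S m)) by (apply lt_0_INR; lia).
  set (x := INR (S m)) in *. destruct w; unfold cheb_angle; fold x.
  - assert (PI - (2 * x - 1) * PI / (2 * x) = PI / (2 * x)) by (field; lra).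
    assert (0 < PI / (2 * x)) by (apply Rdiv_lt_0_compat; lra). lra.
  - assert (PI - x * PI / (x + 1) = PI / (x + 1)) by (field; lra).
    assert (0 < PI / (x + 1)) by (apply Rdiv_lt_0_compat; lra). lra.
  - assert (PI - (2 * x - 1) * PI / (2 * x + 1) = 2 * PI / (2 * x + 1)) by (field; lra).
    assert (0 < 2 * PI / (2 * x + 1)) by (apply Rdiv_lt_0_compat; lra). lra.
  - assert (PI - 2 * x * PI / (2 * x + 1) = PI / (2 * x + 1)) by (field; lra).
    assert (0 < PI / (2 * x + 1)) by (apply Rdiv_lt_0_compat; lra). lra.
Qed.

Theorem lemma6p2 (w : cheb_weight) (n nu : nat) (Q : R -> R) :
  (1 <= n)%nat ->
  is_trig_poly_deg_le nu Q ->
  (is_even_fun Q \/ is_odd_fun Q) ->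
  sum_n_m (fun k => Rabs (Q (cheb_angle w n k)) * cheb_dangle w n k) 1 n
  <= (1 + 2 * PI * INR nu / cheb_nw w n) * RInt (fun tau => Rabs (Q tau)) 0 PI.
Proof.
  intros Hn [a [b HQ]] Hpar.
  assert (HT : forall t, Q t = tp a b nu t) by (intros; now rewrite HQ, trig_poly_eval_tp).
  assert (Hpar_tp : (forall t, tp a b nu (- t) = tp a b nu t) \/ (forall t, tp a b nu (- t) = - tp a b nu t))
    by (destruct Hpar as [He | Ho]; [left | right]; intros t; rewrite <- !HT; auto).
  set (h := PI / cheb_nw w n).
  assert (Hh : 0 < h) by (apply Rdiv_lt_0_compat; [apply PI_RGT_0 | apply cheb_nw_pos; auto]).
  rewrite sum_n_m_fsum, (RInt_ext _ (fun t => Rabs (tp a b nu t))) by (intros; now rewrite HT).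
  rewrite (fsum_ext _ (fun i => Rabs (tp a b nu (cheb_angle w n (S i)))
                                * (cheb_angle w n (S i) - cheb_angle w n i)))
    by (intros i _; unfold cheb_dangle; rewrite HT; now replace (S i - 1)%nat with i by lia).
  assert (Hsum := riemann_sum_bound (tp a b nu) (tpd a b nu) (tp_derive a b nu) (tpd_cont a b nu)
                    (cheb_angle w n) n h 0 PI ltac:(lra) eq_refl
                    (fun i => cheb_angle_step w n i Hn) (cheb_angle_last w n Hn)).
  assert (Hbern := bernstein_L1_half a b nu Hpar_tp).
  set (IT := RInt (fun t => Rabs (tp a b nu t)) 0 PI) in *.
  set (IT' := RInt (fun t => Rabs (tpd a b nu t)) 0 PI) in *.
  assert (HIT : 0 <= IT).
  { apply RInt_ge_0; [assert (H := PI_RGT_0); lra | apply ex_RInt_cont, tp_abs_cont |].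
    intros; apply Rabs_pos. }
  assert (Hnu : 0 <= INR nu) by apply pos_INR.
  assert (h * IT' <= h * (INR nu * IT)) by (apply Rmult_le_compat_l; lra).
  assert (0 <= h * (INR nu * IT)) by (apply Rmult_le_pos; [lra | apply Rmult_le_pos; lra]).
  replace (2 * PI * INR nu / cheb_nw w n) with (2 * INR nu * h)
    by (unfold h; field; apply Rgt_not_eq, cheb_nw_pos; auto).
  nra.
Qed.
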